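(* Let $R>0$, $h>0$ and $\lambda>0$, and let $G_1,G_2$ be independent exponential random variables with rate $\lambda$ (representing $g_1^2,g_2^2$). For $\Delta>0$ let $$\alpha_1(\Delta)=2^R-\frac{h^2}{1+\Delta}-1,\qquad \alpha_2(\Delta)=2^R\frac{1+\Delta}{\Delta}-1,$$ and $Q(\Delta)=\Pr\{G_2\ge[\alpha_1(\Delta)]^+,\ G_1+G_2\ge\alpha_2(\Delta)\}$, where $[x]^+=\max\{x,0\}$. Let $\Delta_t=\frac{h^2}{2^R-1}-1$. Then the cubic equation $$\frac{h^2}{\lambda}\Delta^3-2^R(2^R+h^2)\Delta^2-2^R(2^{R+1}+h^2)\Delta-2^{2R}=0$$ has exactly one positive root $\Delta^\dagger$, and $\Delta^*=\max\{\Delta^\dagger,\Delta_t\}$ maximizes $Q(\Delta)$ over $\Delta>0$.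
   Context: This is the full-duplex Gaussian single-relay channel ($Y_r=\mathsf hX+Z_r$, $Y=\mathsf g_1X_r+\mathsf g_2X+Z$, unit powers and noise) under Rayleigh fading with $|\mathsf g_1|^2,|\mathsf g_2|^2$ i.i.d. exponential with rate $\lambda$, where the relay knows only the realization of its incoming channel $h=|\mathsf h|$. With Gaussian quantization distortion $\Delta$, the quantize-map-and-forward rate is $\big[\min\{\log_2(1+\frac{h^2}{1+\Delta}+g_2^2),\ \log_2(1+g_1^2+g_2^2)-\log_2\frac{1+\Delta}{\Delta}\}\big]^+$, and $Q(\Delta)$ equals one minus the outage probability at rate $R$ conditioned on $h$; so $\Delta^*$ is the outage-optimal quantizer given receiver CSI. *)

From HB Require Import structures.
From mathcomp Require Import all_boot all_order all_algebra.
From mathcomp Require Import all_classical all_reals all_analysis.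
From mathcomp Require Import exponential_distribution.
Set Implicit Arguments. Unset Strict Implicit. Unset Printing Implicit Defensive.
Import Order.TTheory GRing.Theory Num.Theory.
Local Open Scope classical_set_scope.
Local Open Scope ring_scope.

Section qmf.
Context {R : realType}.

Definition alpha1 (Rt h D : R) : R := 2 `^ Rt - h ^+ 2 / (1 + D) - 1.
Definition alpha2 (Rt D : R) : R := 2 `^ Rt * ((1 + D) / D) - 1.

Definition posp (x : R) : R := Num.max x 0.

Definition Qfun (Rt h lam D : R) : \bar R :=
  ((exponential_prob lam \x exponential_prob lam)
     [set z : R * R | (posp (alpha1 Rt h D) <= z.2)%R /\ (alpha2 Rt D <= z.1 + z.2)%R])%E.

Definition Delta_t (Rt h : R) : R := h ^+ 2 / (2 `^ Rt - 1) - 1.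

Definition cubic (Rt h lam D : R) : R :=
  h ^+ 2 / lam * D ^+ 3
  - 2 `^ Rt * (2 `^ Rt + h ^+ 2) * D ^+ 2
  - 2 `^ Rt * (2 `^ (Rt + 1) + h ^+ 2) * D
  - 2 `^ (2 * Rt).

End qmf.

(* Write c = 2^R, H = h^2 and u = 1/D. For 0 <= a <= b, integrating the
   exponential tail over G1 gives Pr{G2 >= a, G1 + G2 >= b} = e^{-lam b}
   (1 + lam (b - a)), so Q(D) is explicit. Below Delta_t the bound [alpha_1]^+
   vanishes and Q(D) = phi(lam alpha_2(D)) with phi(y) = e^{-y}(1 + y)
   decreasing and alpha_2 decreasing in D, so Q(D) <= Q(Delta_t). From Delta_t
   on, Q(D) is a constant times e^{-lam c u} g(u) with g concave in u; the
   tangent bound g(u) <= g(v) + g'(v)(u - v) together with e^t >= 1 + t shows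
   Q(D) <= Q(E) as soon as the derivative at E points towards E, and that
   derivative is a positive multiple of the cubic at E. The cubic equals D^3
   times a strictly decreasing polynomial in u, which yields the unique positive
   root Delta^dagger, with the cubic negative before and positive after it. *)

From mathcomp Require Import all_boot all_order all_algebra.
From mathcomp Require Import all_classical all_reals all_analysis.
From mathcomp Require Import exponential_distribution measurable_realfun.
From mathcomp Require Import ring lra.
Import Order.TTheory GRing.Theory Num.Theory.
Set Implicit Arguments. Unset Strict Implicit. Unset Printing Implicit Defensive.
Import numFieldTopology.Exports.
Local Open Scope classical_set_scope.
Local Open Scope ring_scope.

Section density.
Local Open Scope ereal_scope.
Context d (T : measurableType d) (R : realType).
Variables (nu : {finite_measure set T -> \bar R})
  (mu : {sigma_finite_measure set T -> \bar R}) (g : T -> R).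
Hypotheses (intg : mu.-integrable setT (EFin \o g))
  (nuE : forall A, measurable A -> nu A = \int[mu]_(x in A) (g x)%:E).

(* The Radon-Nikodym derivative of nu is a.e. equal to the density g. *)
Lemma integral_density (k : T -> \bar R) (E : set T) :
    (forall x, 0 <= k x) -> measurable E -> measurable_fun E k ->
  \int[nu]_(x in E) k x = \int[mu]_(x in E) (k x * (g x)%:E).
Proof.
move=> k0 mE mk.
have mg := measurable_int _ intg.
have numu : nu `<< mu.
  move=> N muN B mB BN; rewrite nuE// null_set_integral//; last exact: muN.
  exact: measurable_funTS.
have intRN := Radon_Nikodym_SigmaFinite.f_integrable numu.
rewrite -(Radon_Nikodym_SigmaFinite.change_of_variables numu)//.
apply: ae_eq_integral => //.
- by apply: emeasurable_funM => //; exact: measurable_funTS (measurable_int _ intRN).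
- by apply: emeasurable_funM => //; exact: measurable_funTS.
apply: ae_eqe_mul2l; apply: integral_ae_eq => //.
- exact: integrableS intRN.
- exact: measurable_funTS.
- by move=> A _ mA; rewrite -Radon_Nikodym_SigmaFinite.f_integral// nuE.
Qed.

End density.

Lemma xsection_tail_sum (R : realType) (a b x : R) :
  xsection [set z : R * R | a <= z.2 /\ b <= z.1 + z.2] x =
  `[Num.max a (b - x), +oo[%classic.
Proof.
apply/seteqP; split => y; rewrite /xsection /= inE /= in_itv /= andbT ge_max.
  by move=> [-> ]; rewrite lerBlDl => ->.
by move=> /andP[-> ]; rewrite lerBlDl.
Qed.

Section exponential_tail.
Context {R : realType}.
Variable lam : R.
Hypothesis lam0 : 0 < lam.
Notation mu := (@lebesgue_measure R).
Notation pdf := (exponential_pdf lam).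

Lemma exponential_prob_itvcy (t : R) : 0 <= t ->
  exponential_prob lam `[t, +oo[%classic = (expR (- lam * t))%:E.
Proof.
move=> t0; have cexp : continuous (fun z : R^o => expR (- lam * z)).
  move=> z; apply: continuous_comp; last exact: continuous_expR.
  by apply: continuousM => //; apply: (@continuousN _ R^o); exact: cst_continuous.
rewrite /exponential_prob.
rewrite (@ge0_continuous_FTC2y _ _ (fun x => - expR (- lam * x)) _ 0)//.
- by rewrite EFinN sub0e oppeK.
- by move=> x _; apply: exponential_pdf_ge0; exact: ltW.
- apply: (@continuous_subspaceW R^o _ _ [set` `[0, +oo[]).
    by move=> x /=; rewrite !in_itv/= !andbT => /(le_trans t0).
  exact: within_continuous_exponential_pdf.
- rewrite -oppr0; apply: cvgN.
  rewrite (_ : (fun x => expR (- lam * x)) =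
               (fun z => expR (- z)) \o (fun z => lam * z)); last first.
    by apply: eq_fun => x; rewrite /= mulNr.
  apply: (@cvg_comp _ _ _ _ _ _ (pinfty_nbhs R)); last exact: cvgr_expR.
  exact: gt0_cvgMry.
- by apply: cvgN; apply/cvg_at_right_filter; exact: cexp.
- move=> x; rewrite in_itv/= andbT => tx.
  by apply: derive1_exponential_pdf; rewrite in_itv/= andbT (le_lt_trans t0).
Qed.

Lemma exponential_pdf_max_split (a b x : R) : 0 <= a -> a <= b ->
  expR (- lam * Num.max a (b - x)) * pdf x =
  lam * expR (- lam * b) * \1_(`[0, b - a[%classic) x
  + expR (- lam * a) * (pdf x * \1_(`[b - a, +oo[%classic) x).
Proof.
move=> a0 ab; rewrite !indicE !mem_setE !in_itv /= andbT.
have [x0|x0] := ltP x 0.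
  by rewrite lt0_exponential_pdf // !(mulr0, mul0r, addr0).
rewrite exponential_pdfE // /=.
have [xba|xba] := ltP x (b - a).
  rewrite (max_idPr _); last lra.
  rewrite !(mulr1, mulr0, addr0) mulrCA -expRD; congr (_ * expR _); ring.
by rewrite (max_idPl _); [rewrite !(mulr0, mulr1, add0r) | lra].
Qed.

Lemma integral_exponential_pdf_max (a b : R) : 0 <= a -> a <= b ->
  (\int[mu]_x (expR (- lam * Num.max a (b - x)) * pdf x)%:E
   = (expR (- lam * b) * (1 + lam * (b - a)))%:E)%E.
Proof.
move=> a0 ab; under eq_integral do
  rewrite exponential_pdf_max_split// EFinD (EFinM (lam * _)) (EFinM (expR _)).
pose I1 x := (\1_(`[0, b - a[%classic) x : R)%:E.
pose I2 x := (pdf x * \1_(`[b - a, +oo[%classic) x)%:E.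
have pdf0 x : 0 <= pdf x by apply: exponential_pdf_ge0; exact: ltW.
have mI1 : measurable_fun setT I1 by exact/measurable_EFinP/measurable_indic.
have mI2 : measurable_fun setT I2.
  apply/measurable_EFinP/measurable_funM; first exact: measurable_exponential_pdf.
  exact: measurable_indic.
have I10 x : (0 <= I1 x)%E by rewrite lee_fin.
have I20 x : (0 <= I2 x)%E by rewrite lee_fin mulr_ge0.
have lam_expR_ge0 : 0 <= lam * expR (- lam * b) by rewrite mulr_ge0 ?expR_ge0 ?ltW.
rewrite ge0_integralD //; last 4 first.
- by move=> x _; apply: mule_ge0; [rewrite lee_fin | exact: I10].
- exact: emeasurable_funM.
- by move=> x _; apply: mule_ge0; [rewrite lee_fin expR_ge0 | exact: I20].
- exact: emeasurable_funM.
rewrite !ge0_integralZl ?lee_fin ?expR_ge0 //; last by move=> x _; exact: I20.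
rewrite integral_indic // setIT.
rewrite [X in (_ * X + _)%E](_ : _ = (b - a)%:E); last first.
  apply: eq_trans (lebesgue_measure_itv `[0, b - a[) _.
  by rewrite /= lte_fin; case: ltP => ?; [rewrite sube0 | congr EFin; lra].
rewrite [X in (_ + _ * X)%E](_ : _ = exponential_prob lam `[b - a, +oo[%classic).
  rewrite exponential_prob_itvcy ?subr_ge0 // -!EFinM -EFinD; congr EFin.
  rewrite -expRD (_ : - lam * a + - lam * (b - a) = - lam * b); last ring.
  ring.
rewrite /exponential_prob [RHS]integral_mkcond epatch_indic.
by apply: eq_integral => x _; rewrite EFinM.
Qed.

(* The probability instance of [exponential_prob lam] depends on [lam0], so it
   is not inferred and has to be named. *)
Let P := exponential_distribution_exponential_prob__canonical__probability_measure_Probability lam0.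

Lemma exponential_prod_tail_sum (a b : R) : 0 <= a -> a <= b ->
  ((exponential_prob lam \x exponential_prob lam)
     [set z : R * R | (a <= z.2)%R /\ (b <= z.1 + z.2)%R] =
  (expR (- lam * b) * (1 + lam * (b - a)))%:E)%E.
Proof.
move=> a0 ab; rewrite -integral_exponential_pdf_max // /product_measure1.
transitivity (\int[P]_x (expR (- lam * Num.max a (b - x)))%:E)%E.
  apply: (@eq_integral _ _ _ P) => x _.
  by rewrite /= xsection_tail_sum exponential_prob_itvcy // le_max a0.
rewrite (@integral_density _ _ _ P mu (exponential_pdf lam)) //.
- exact: integrable_exponential_pdf.
- apply/measurable_EFinP; apply: measurableT_comp; first exact: measurable_expR.
  apply: measurable_funM => //; apply: measurable_maxr => //.
  exact: measurable_funB.
Qed.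

End exponential_tail.

Section real_inequalities.
Context {R : realType}.

Lemma powR_gt1 (a p : R) : 1 < a -> 0 < p -> 1 < a `^ p.
Proof.
move=> a1 p0; have := @gt0_ltr_powR R p p0 1 a; rewrite powR1; apply => //.
- by rewrite rpred1.
- by rewrite nnegrE ltW // (lt_trans ltr01).
Qed.

(* From g u <= g v + s (u - v) and e^t >= 1 + t: the comparison only needs the
   sign of the slope of u |-> e^{-k u} g u at v, namely that of s - k g v. *)
Lemma expRN_mul_le (k s gu gv u v : R) : 0 <= gv ->
  gu <= gv + s * (u - v) -> (s - k * gv) * (u - v) <= 0 ->
  expR (- (k * u)) * gu <= expR (- (k * v)) * gv.
Proof.
move=> gv0 gu_le slope.
have gu_exp : gu <= gv * expR (k * (u - v)).
  apply: (le_trans gu_le); apply: (@le_trans _ _ (gv * (1 + k * (u - v)))).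
    by nra.
  by apply: ler_wpM2l => //; exact: expR_ge1Dx.
rewrite (_ : expR (- (k * v)) = expR (- (k * u)) * expR (k * (u - v))).
  by rewrite -mulrA ler_wpM2l ?expR_ge0 // mulrC.
by rewrite -expRD; congr expR; ring.
Qed.

Lemma expRN_mul1D_le (y y' : R) : 0 <= y' -> y' <= y ->
  expR (- y) * (1 + y) <= expR (- y') * (1 + y').
Proof.
move=> y'0 yy'; have := @expRN_mul_le 1 1 (1 + y) (1 + y') y y'.
rewrite !mul1r; apply; [lra | lra | nra].
Qed.

Lemma ler_div1D_tangent (u v : R) : 0 <= u -> 0 <= v ->
  u / (1 + u) <= v / (1 + v) + (u - v) / (1 + v) ^+ 2.
Proof.
move=> u0 v0; rewrite -subr_ge0.
have -> : v / (1 + v) + (u - v) / (1 + v) ^+ 2 - u / (1 + u) =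
    (u - v) ^+ 2 / ((1 + u) * (1 + v) ^+ 2).
  by field; rewrite !paddr_eq0 ?oner_eq0 //; lra.
by rewrite divr_ge0 ?sqr_ge0 // mulr_ge0 ?sqr_ge0 //; lra.
Qed.

End real_inequalities.

Section reversed_cubic.
Context {R : realType} (k3 k2 k1 k0 : R).
Hypotheses (k3_gt0 : 0 < k3) (k2_gt0 : 0 < k2) (k1_ge0 : 0 <= k1) (k0_ge0 : 0 <= k0).

Definition rev_cubic (w : R) := k3 - k2 * w - k1 * w ^+ 2 - k0 * w ^+ 3.

Lemma rev_cubic_decr (w1 w2 : R) : 0 <= w1 -> w1 < w2 ->
  rev_cubic w2 < rev_cubic w1.
Proof.
move=> w10 w12; have w20 : 0 <= w2 by lra.
have d2 : w1 ^+ 2 <= w2 ^+ 2 by rewrite lerXn2r ?nnegrE // ltW.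
have d3 : w1 ^+ 3 <= w2 ^+ 3 by rewrite lerXn2r ?nnegrE // ltW.
have := ler_wpM2l k1_ge0 d2; have := ler_wpM2l k0_ge0 d3.
have : k2 * w1 < k2 * w2 by rewrite ltr_pM2l.
rewrite /rev_cubic; lra.
Qed.

Lemma rev_cubic_root : exists2 w0, 0 < w0 & rev_cubic w0 = 0.
Proof.
pose W := k3 / k2 + 1.
have W0 : 0 <= W by rewrite /W; have := divr_ge0 (ltW k3_gt0) (ltW k2_gt0); lra.
have rcW : rev_cubic W < 0.
  have r0 : 0 <= k3 / k2 by rewrite divr_ge0 ?ltW.
  apply: (lt_le_trans (rev_cubic_decr r0 _)); first by rewrite /W; lra.
  rewrite /rev_cubic mulrC divfK ?gt_eqF //.
  have := mulr_ge0 k1_ge0 (exprn_ge0 2 r0); have := mulr_ge0 k0_ge0 (exprn_ge0 3 r0).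
  lra.
have rc0 : rev_cubic 0 = k3 by rewrite /rev_cubic; ring.
pose p : {poly R} := k3%:P - k2 *: 'X - k1 *: 'X^2 - k0 *: 'X^3.
have pE w : p.[w] = rev_cubic w by rewrite /p /rev_cubic !hornerE.
have cp : {within `[0, W], continuous (horner p)}.
  by apply: continuous_subspaceT => x; exact: continuous_horner.
have [|w0 /[!in_itv] /= /andP[w00 _] pw0] := @IVT R (horner p) 0 W 0 W0 cp.
  by rewrite !pE rc0 ge_min le_max (ltW k3_gt0) (ltW rcW) orbT.
exists w0; last by rewrite -pE.
rewrite lt_neqAle w00 andbT; apply/eqP => w0E.
by move: pw0; rewrite -w0E pE rc0 => k30; move: k3_gt0; rewrite k30 ltxx.
Qed.

Lemma rev_cubic_ler (w1 w2 : R) : 0 <= w1 -> 0 <= w2 ->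
  (rev_cubic w1 <= rev_cubic w2) = (w2 <= w1).
Proof.
move=> w10 w20; case: (ltgtP w1 w2) => [lt|gt|->]; last by rewrite !lexx.
- by rewrite leNgt rev_cubic_decr.
- by rewrite ltW // rev_cubic_decr.
Qed.

End reversed_cubic.

Section qmf.
Context {R : realType} (Rt h lam : R).
Hypotheses (Rt_gt0 : 0 < Rt) (h_gt0 : 0 < h) (lam_gt0 : 0 < lam).

Let c := 2 `^ Rt.
Let H := h ^+ 2.

Let c_gt1 : 1 < c. Proof. by rewrite powR_gt1 // ltr1n. Qed.
Let c_gt0 : 0 < c. Proof. exact: lt_trans c_gt1. Qed.
Let H_gt0 : 0 < H. Proof. exact: exprn_gt0. Qed.

Lemma cubicE (D : R) : cubic Rt h lam D =
  H / lam * D ^+ 3 - c * (c + H) * D ^+ 2 - c * (c * 2 + H) * D - c ^+ 2.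
Proof.
have c0 : 0 <= c by exact: ltW.
rewrite /cubic -/c -/H powRD ?pnatr_eq0 ?implybT // powRr1 // -/c.
by rewrite (mulrC 2 Rt) powRrM -/c powR_mulrn.
Qed.

Lemma cubic_rev_cubic (D : R) : 0 < D -> cubic Rt h lam D =
  D ^+ 3 * rev_cubic (H / lam) (c * (c + H)) (c * (c * 2 + H)) (c ^+ 2) D^-1.
Proof. by move=> D0; rewrite cubicE /rev_cubic; field; rewrite !gt_eqF. Qed.

Lemma cubic_unique_root : exists Dd : R,
  [/\ 0 < Dd, cubic Rt h lam Dd = 0,
      forall D, 0 < D -> cubic Rt h lam D = 0 -> D = Dd &
      forall D, Dd <= D -> 0 <= cubic Rt h lam D].
Proof.
have c0 := c_gt0; have H0 := H_gt0.
have k0 : 0 <= c ^+ 2 by exact: sqr_ge0.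
have k1 : 0 <= c * (c * 2 + H) by rewrite mulr_ge0 //; lra.
have k2 : 0 < c * (c + H) by rewrite mulr_gt0 //; lra.
have k3 : 0 < H / lam by exact: divr_gt0.
have [w0 w0_gt0 rc_w0] := rev_cubic_root k3 k2 k1 k0.
have w0_ge0 := ltW w0_gt0.
have inv_le D : 0 < D -> (D^-1 <= w0) = (w0^-1 <= D).
  by move=> D0; rewrite -[D in RHS]invrK lef_pV2 ?posrE ?invr_gt0.
have le_inv D : 0 < D -> (w0 <= D^-1) = (D <= w0^-1).
  by move=> D0; rewrite -[D in RHS]invrK lef_pV2 ?posrE ?invr_gt0.
have cubic_ge0 D : 0 < D -> (0 <= cubic Rt h lam D) = (w0^-1 <= D).
  move=> D0; rewrite cubic_rev_cubic // pmulr_rge0 ?exprn_gt0 // -rc_w0.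
  by rewrite rev_cubic_ler ?invr_ge0 ?(ltW D0) // inv_le.
have cubic_le0 D : 0 < D -> (cubic Rt h lam D <= 0) = (D <= w0^-1).
  move=> D0; rewrite cubic_rev_cubic // pmulr_rle0 ?exprn_gt0 // -rc_w0.
  by rewrite rev_cubic_ler ?invr_ge0 ?(ltW D0) // le_inv.
have Dd0 : 0 < w0^-1 by rewrite invr_gt0.
exists w0^-1; split => //.
- by apply/le_anti; rewrite cubic_le0 // cubic_ge0 // lexx.
- move=> D D0 cD; apply/le_anti.
  by rewrite -cubic_le0 // -cubic_ge0 // cD lexx.
- by move=> D DdD; rewrite cubic_ge0 // (lt_le_trans Dd0).
Qed.

Lemma alpha2E (D : R) : 0 < D -> alpha2 Rt D = c - 1 + c / D.
Proof. by move=> D0; rewrite /alpha2 -/c; field; rewrite gt_eqF. Qed.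

Lemma alpha2_ge0 (D : R) : 0 < D -> 0 <= alpha2 Rt D.
Proof.
move=> D0; rewrite alpha2E //; have := c_gt1.
have : 0 <= c / D by rewrite divr_ge0 ?ltW.
lra.
Qed.

Lemma alpha1_ge0 (D : R) : 0 < D -> (0 <= alpha1 Rt h D) = (Delta_t Rt h <= D).
Proof.
move=> D0; have := c_gt1 => c1.
rewrite /alpha1 /Delta_t -/c -/H (addrAC c) subr_ge0 ler_pdivrMr; last lra.
by rewrite lerBlDr ler_pdivrMr ?subr_gt0 // mulrC (addrC D).
Qed.

Lemma alpha1_Delta_t : alpha1 Rt h (Delta_t Rt h) = 0.
Proof.
have := c_gt1; rewrite /alpha1 /Delta_t -/c -/H addrCA subrr addr0 => c1.
by field; rewrite subr_eq0 !gt_eqF.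
Qed.

Definition Qval (D : R) : R := expR (- lam * alpha2 Rt D) *
  (1 + lam * (alpha2 Rt D - posp (alpha1 Rt h D))).

Lemma QfunE (D : R) : 0 < D -> Qfun Rt h lam D = (Qval D)%:E.
Proof.
move=> D0; rewrite /Qfun exponential_prod_tail_sum // /posp ?le_max ?lexx ?orbT //.
rewrite ge_max alpha2_ge0 // andbT alpha2E // /alpha1 -/c -/H.
have : 0 <= H / (1 + D) by rewrite divr_ge0 ?ltW //; lra.
have : 0 <= c / D by rewrite divr_ge0 ?ltW.
lra.
Qed.

Lemma Qval_le_Delta_t (D : R) : 0 < D -> alpha1 Rt h D < 0 ->
  Qval D <= Qval (Delta_t Rt h).
Proof.
move=> D0 aD; have DDt : D < Delta_t Rt h by rewrite ltNge -alpha1_ge0 // -ltNge.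
have Dt0 : 0 < Delta_t Rt h by exact: lt_trans DDt.
rewrite /Qval /posp (max_idPr (ltW aD)) alpha1_Delta_t maxxx !subr0 !mulNr.
apply: expRN_mul1D_le; first by rewrite mulr_ge0 ?alpha2_ge0 ?ltW.
rewrite ler_pM2l // !alpha2E // lerD2l ler_pM2l //.
by rewrite lef_pV2 ?posrE // ltW.
Qed.

Let gq (u : R) := 1 + lam * c * u + lam * H * (u / (1 + u)).

Lemma QvalE_above (D : R) : 0 < D -> 0 <= alpha1 Rt h D ->
  Qval D = expR (- lam * (c - 1)) * (expR (- (lam * c * D^-1)) * gq D^-1).
Proof.
move=> D0 aD; rewrite /Qval /posp (max_idPl aD).
have -> : alpha2 Rt D - alpha1 Rt h D = c * D^-1 + H * (D^-1 / (1 + D^-1)).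
  by rewrite /alpha2 /alpha1 -/c -/H; field; rewrite !paddr_eq0 ?oner_eq0 // ?gt_eqF
    ?invr_ge0 ?ltW.
by rewrite alpha2E // mulrA -expRD /gq; congr (expR _ * _); ring.
Qed.

(* Up to the positive factor lam^2 / (E^2 D (1 + E)^2), the slope condition of
   [expRN_mul_le] at v = 1/E, u = 1/D is the sign of cubic E * (E - D): this is
   where the cubic comes from. *)
Lemma Qval_le (D E : R) : 0 < D -> 0 < E ->
  0 <= alpha1 Rt h D -> 0 <= alpha1 Rt h E ->
  cubic Rt h lam E * (E - D) <= 0 -> Qval D <= Qval E.
Proof.
move=> D0 E0 aD aE cE; rewrite !QvalE_above // ler_pM2l ?expR_gt0 //.
have c0 := c_gt0; have H0 := H_gt0.
have Di : 0 <= D^-1 by rewrite invr_ge0 ltW.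
have Ei : 0 <= E^-1 by rewrite invr_ge0 ltW.
have lamH : 0 <= lam * H by rewrite mulr_ge0 ?ltW.
apply: (@expRN_mul_le _ _ (lam * c + lam * H / (1 + E^-1) ^+ 2)).
- have : 0 <= lam * c * E^-1 by rewrite mulr_ge0 // mulr_ge0 // ltW.
  have : 0 <= lam * H * (E^-1 / (1 + E^-1)).
    by rewrite mulr_ge0 // divr_ge0 // addr_ge0.
  rewrite /gq; lra.
- rewrite -subr_ge0 (_ : _ - _ = lam * H * (E^-1 / (1 + E^-1)
      + (D^-1 - E^-1) / (1 + E^-1) ^+ 2) - lam * H * (D^-1 / (1 + D^-1))).
    by rewrite subr_ge0 ler_wpM2l // ler_div1D_tangent.
  by rewrite /gq; ring.
have E1 : 0 < 1 + E by rewrite addr_gt0.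
have fac : 0 <= lam ^+ 2 / (E ^+ 2 * D * (1 + E) ^+ 2).
  by rewrite divr_ge0 ?sqr_ge0 // !mulr_ge0 ?sqr_ge0 // ltW.
rewrite (_ : _ * _ = cubic Rt h lam E * (E - D) * (lam ^+ 2 / (E ^+ 2 * D * (1 + E) ^+ 2))).
  exact: mulr_le0_ge0.
rewrite cubicE /gq; field.
by rewrite !gt_eqF ?addr_gt0 ?invr_gt0.
Qed.

End qmf.

Theorem mainTheorem10 (R : realType) (Rt h lam : R) :
  0 < Rt -> 0 < h -> 0 < lam ->
  exists Ddag : R,
    [/\ 0 < Ddag, cubic Rt h lam Ddag = 0,
        (forall D : R, 0 < D -> cubic Rt h lam D = 0 -> D = Ddag) &
        (forall D : R, 0 < D ->
           (Qfun Rt h lam D <= Qfun Rt h lam (Num.max Ddag (Delta_t Rt h)))%E)].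
Proof.
move=> Rt0 h0 lam0.
have [Dd [Dd0 cDd Dd_uniq cubic_ge0]] := cubic_unique_root Rt0 h0 lam0.
exists Dd; split; [exact: Dd0 | exact: cDd | exact: Dd_uniq | move=> D D0].
set Dt := Delta_t Rt h; set Ds := Num.max Dd Dt.
have Ds0 : 0 < Ds by rewrite lt_max Dd0.
have aDs : 0 <= alpha1 Rt h Ds by rewrite alpha1_ge0 // le_max lexx orbT.
have Qval_le_Ds E : 0 < E -> 0 <= alpha1 Rt h E -> Qval Rt h lam E <= Qval Rt h lam Ds.
  move=> E0 aE; apply: Qval_le => //.
  have [DtDd|DdDt] := leP Dt Dd; first by rewrite /Ds (max_idPl DtDd) cDd mul0r.
  rewrite /Ds (max_idPr (ltW DdDt)); apply: mulr_ge0_le0.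
    exact/cubic_ge0/ltW.
  by rewrite subr_le0 -alpha1_ge0.
rewrite !QfunE // lee_fin.
have [aD|aD] := leP 0 (alpha1 Rt h D); first exact: Qval_le_Ds.
have Dt0 : 0 < Dt by rewrite (lt_trans D0) // ltNge -alpha1_ge0 // -ltNge.
apply: le_trans (Qval_le_Delta_t Rt0 h0 lam0 D0 aD) (Qval_le_Ds Dt Dt0 _).
by rewrite alpha1_Delta_t.
Qed.
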